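(* Let $K$ be a field of characteristic $0$, let $L=\mathcal{L}(x,y)$ be the free Lie algebra over $K$ freely generated by $x,y$, and let $\delta$ be the derivation of $L$ determined by $\delta(x)=0$, $\delta(y)=x$. Let $k\geq 0$ be an integer and $p\in L$, and put $f=[p,\delta^k(p)]$. Then $f$ is a $K$-linear combination of pseudodeterminants of degree $(k,0)$, i.e. of elements $U^{(k,0)}_{A,B}=[\delta^k(A),B]-[A,\delta^k(B)]$ with $A,B$ Hall monomials.
   Context: For Hall monomials $A,B$ of $L$ (elements of the Hall basis of $L$, built from basic words with respect to the degree-lexicographic order with $x<y$) and integers $m,k\geq 0$, the pseudodeterminant of degree $(m,k)$ is $U^{(m,k)}_{A,B}=[\delta^m(A),\delta^{k}(B)]-[\delta^{k}(A),\delta^m(B)]$. *)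

From HB Require Import structures.
From mathcomp Require Import all_boot all_order all_algebra.
Set Implicit Arguments. Unset Strict Implicit. Unset Printing Implicit Defensive.
Import Order.TTheory GRing.Theory Num.Theory.
Local Open Scope ring_scope.

(* Model: the free Lie algebra L(x,y) is realised (Witt / PBW) as the Lie
   subalgebra generated by x and y of the free associative algebra on x,y,
   with bracket [a,b] = ab - ba.  Elements of the ambient algebra are
   represented as coefficient functions on words (seq bool); the letter x is
   [false] and y is [true] (so x < y).  The product is the Cauchy product
   (only finitely many splittings of a word), so this is K<<x,y>>, which
   contains K<x,y>. *)

Section FreeLie.
Variable K : fieldType.

Definition ser := seq bool -> K.

Definition szero : ser := fun _ => 0.
Definition sadd (f g : ser) : ser := fun w => f w + g w.
Definition sscale (c : K) (f : ser) : ser := fun w => c * f w.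
Definition smul (f g : ser) : ser :=
  fun w => \sum_(i < (size w).+1) f (take i w) * g (drop i w).
Definition sbr (f g : ser) : ser := fun w => smul f g w - smul g f w.

Definition gen (b : bool) : ser := fun w => (w == [:: b])%:R.
Definition sx : ser := gen false.
Definition sy : ser := gen true.

Inductive in_freeLie : ser -> Prop :=
| fl_gen b : in_freeLie (gen b)
| fl_add f g : in_freeLie f -> in_freeLie g -> in_freeLie (sadd f g)
| fl_scale c f : in_freeLie f -> in_freeLie (sscale c f)
| fl_br f g : in_freeLie f -> in_freeLie g -> in_freeLie (sbr f g).

(* The derivation delta with delta(x) = 0, delta(y) = x, extended to the
   associative algebra (a derivation there, hence of the commutator bracket,
   and it restricts to the unique Lie derivation of L with these values):
   on a word u, delta(u) = sum over occurrences of y in u of the word with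
   that y replaced by x. *)
Definition sdelta (f : ser) : ser :=
  fun w => \sum_(i < size w)
             (if nth true w i == false then f (set_nth false w i true) else 0).

Definition sdeltan (n : nat) (f : ser) : ser := iter n sdelta f.

Definition pseudodet (m k : nat) (A B : ser) : ser :=
  fun w => sbr (sdeltan m A) (sdeltan k B) w - sbr (sdeltan k A) (sdeltan m B) w.

(* Hall basis: basic (Lyndon) words over x < y and their standard bracketing *)
Fixpoint lexlt (u v : seq bool) : bool :=
  match u, v with
  | _, [::] => false
  | [::], _ :: _ => true
  | a :: u', b :: v' => (~~ a && b) || ((a == b) && lexlt u' v')
  end.

Definition lyndon (w : seq bool) : bool :=
  (0 < size w)%N && [forall i : 'I_(size w), (0 < i)%N ==> lexlt w (drop i w)].

(* split point of the standard factorisation: w = u v with v the longest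
   proper Lyndon suffix *)
Definition sf_idx (w : seq bool) : nat :=
  (find (fun i => lyndon (drop i w)) (iota 1 (size w).-1)).+1.

Fixpoint hall_aux (n : nat) (w : seq bool) : ser :=
  match n with
  | 0 => szero
  | n'.+1 =>
      if size w == 1%N then gen (head false w)
      else sbr (hall_aux n' (take (sf_idx w) w)) (hall_aux n' (drop (sf_idx w) w))
  end.

Definition hall_mono (w : seq bool) : ser := hall_aux (size w) w.

Definition is_hall (A : ser) : Prop := exists w, lyndon w /\ A = hall_mono w.

End FreeLie.

From HB Require Import structures.
From mathcomp Require Import all_boot all_order all_algebra.
From mathcomp Require Import ring zify.
From Stdlib Require Import FunctionalExtensionality.
Import Order.TTheory GRing.Theory.

(* The Hall monomials H w (w Lyndon) span L.  It suffices to expand a bracket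
   [H u, H v] with u < v Lyndon into Hall monomials H h with h < v.  If (u, v)
   is the standard factorisation of uv, then [H u, H v] = H (uv).  Otherwise
   u = u1 u2 with u2 < v, and the Jacobi identity
     [[H u1, H u2], H v] = [[H u1, H v], H u2] + [H u1, [H u2, H v]]
   reduces to brackets that are smaller, first for the total length and then
   for the larger of the two words.  Writing p = sum_i c_i H_i, bilinearity gives
   [p, d^k p] = sum_(i,j) c_i c_j [H_i, d^k H_j]; symmetrising in (i, j), which
   divides by 2, turns this into -1/2 sum_(i,j) c_i c_j U^(k,0)_(H_j, H_i). *)

Set Implicit Arguments.
Unset Strict Implicit.
Unset Printing Implicit Defensive.

Implicit Types u v w : seq bool.

Lemma lexltE u v : lexlt u v = (u < v :> seqlexi bool)%O.
Proof. by elim: u v => [|a u IH] [|b v] //=; rewrite ltxi_cons IH; case: a; case: b. Qed.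

Lemma lexlt_irr u : lexlt u u = false.
Proof. by rewrite lexltE ltxx. Qed.

Lemma lexlt_trans v u w : lexlt u v -> lexlt v w -> lexlt u w.
Proof. rewrite !lexltE; exact: lt_trans. Qed.

Lemma lexlt_asym u v : lexlt u v -> lexlt v u = false.
Proof. by rewrite !lexltE => /lt_gtF. Qed.

Lemma lexlt_total u v : u != v -> lexlt u v || lexlt v u.
Proof. by rewrite !lexltE; case: ltgtP. Qed.

Lemma lexlt_cat2l s u v : lexlt (s ++ u) (s ++ v) = lexlt u v.
Proof. by elim: s => [|a s IH] //=; rewrite eqxx IH; case: a. Qed.

Lemma lexlt_prefix u s : lexlt u (u ++ s) = (s != [::]).
Proof. by rewrite -{1}(cats0 u) lexlt_cat2l; case: s. Qed.

Definition mismatch_lt u v :=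
  exists p s t, u = p ++ false :: s /\ v = p ++ true :: t.

Lemma mismatch_lexlt u v : mismatch_lt u v -> lexlt u v.
Proof. by case=> p [s [t [-> ->]]]; rewrite lexlt_cat2l. Qed.

Lemma mismatch_cat u v s t : mismatch_lt u v -> mismatch_lt (u ++ s) (v ++ t).
Proof. by case=> p [s' [t' [-> ->]]]; exists p, (s' ++ s), (t' ++ t); rewrite -!catA. Qed.

Lemma mismatch_lexlt_cat u v s t : mismatch_lt u v -> lexlt (u ++ s) (v ++ t).
Proof. by move/(mismatch_cat s t)/mismatch_lexlt. Qed.

Lemma lexlt_cases u v :
  lexlt u v -> (exists2 s, s != [::] & v = u ++ s) \/ mismatch_lt u v.
Proof.
elim: u v => [|a u IH] [|b v] //=; first by left; exists (b :: v).
case: a; case: b => //=; rewrite ?eqxx /=.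
- case/IH => [[s hs ->]|[p [s [t [-> ->]]]]]; first by left; exists s.
  by right; exists (true :: p), s, t.
- by right; exists [::], u, v.
- case/IH => [[s hs ->]|[p [s [t [-> ->]]]]]; first by left; exists s.
  by right; exists (false :: p), s, t.
Qed.

Lemma lexlt_longer_mismatch u v : size v < size u -> lexlt u v -> mismatch_lt u v.
Proof.
move=> hs /lexlt_cases [[s hs' e]|//].
by move: hs; rewrite e size_cat; case: s hs' {e} => //= x s _; lia.
Qed.

Lemma lexle_lexlt_cat v s :
  v != [::] -> (v == s) || lexlt v s -> lexlt v (s ++ v).
Proof.
move=> hv /orP [/eqP <-|]; first by rewrite lexlt_prefix.
case/lexlt_cases => [[t ht ->]|hs]; first by rewrite -catA lexlt_prefix; case: t ht.
by rewrite -[v in lexlt v _]cats0; exact: mismatch_lexlt_cat.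
Qed.

Lemma lyndon_drop w i : lyndon w -> 0 < i -> i < size w -> lexlt w (drop i w).
Proof. by case/andP => _ /forallP h hi hiw; have := h (Ordinal hiw); rewrite /= hi. Qed.

Lemma lyndon_intro w : 0 < size w ->
  (forall i, 0 < i -> i < size w -> lexlt w (drop i w)) -> lyndon w.
Proof.
move=> hs h; rewrite /lyndon hs; apply/forallP => -[i hi] /=.
by apply/implyP => h0; exact: h.
Qed.

Lemma lyndon_size w : lyndon w -> 0 < size w.
Proof. by case/andP. Qed.

Lemma lyndon1 b : lyndon [:: b].
Proof. by apply: lyndon_intro => // -[|i]. Qed.

Lemma lyndon_cat u v : lyndon u -> lyndon v -> lexlt u v ->
  lyndon (u ++ v) /\ lexlt (u ++ v) v.
Proof.
move=> hu hv huv; have hu0 := lyndon_size hu.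
have hlt : lexlt (u ++ v) v.
  case: (lexlt_cases huv) => [[t ht e]|hm]; last first.
    by rewrite -[v in lexlt _ v]cats0; exact: mismatch_lexlt_cat.
  have : lexlt v t.
    have -> : t = drop (size u) v by rewrite e drop_size_cat.
    by apply: lyndon_drop => //; rewrite e size_cat; case: t ht {e} => //= *; lia.
  by rewrite {2}e -(lexlt_cat2l u) -e.
split=> //; apply: lyndon_intro => [|i hi0 hi]; first by rewrite size_cat; lia.
rewrite drop_cat; case: ltnP => hiu.
  apply/mismatch_lexlt_cat/lexlt_longer_mismatch; first by rewrite size_drop; lia.
  exact: lyndon_drop.
have [->|hi1] := posnP (i - size u); first by rewrite drop0.
by apply: lexlt_trans hlt _; apply: lyndon_drop => //; move: hi; rewrite size_cat; lia.
Qed.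

Definition min_suffix_at w j := [/\ 0 < j, j < size w &
  forall i, 0 < i -> i < size w -> i != j -> lexlt (drop j w) (drop i w)].

Lemma min_suffix_exists w : 1 < size w -> exists j, min_suffix_at w j.
Proof.
move=> hw; pose i1 : 'I_(size w) := Ordinal hw.
case: (@arg_minP _ _ _ i1 (fun i => 0 < i) (fun i => drop i w : seqlexi bool)) => //.
move=> j hj0 hmin; exists j; split => // i hi0 hi hij.
rewrite lexltE lt_neqAle (hmin (Ordinal hi)) // andbT.
apply: contra hij => /eqP/(congr1 size); rewrite !size_drop => e.
by apply/eqP; rewrite -(subKn (ltnW hi)) -e subKn // ltnW.
Qed.

Lemma min_suffix_lyndon w j : min_suffix_at w j -> lyndon (drop j w).
Proof.
case=> hj0 hj hmin; apply: lyndon_intro => [|l hl0]; rewrite size_drop; first lia.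
by move=> hl; rewrite drop_drop; apply: hmin; lia.
Qed.

Lemma min_suffix_longer_not_lyndon w j i :
  min_suffix_at w j -> 0 < i -> i < j -> ~~ lyndon (drop i w).
Proof.
case=> hj0 hj hmin hi0 hij; apply/negP => hl.
have h1 : lexlt (drop i w) (drop j w).
  rewrite -(subnK (ltnW hij)) -drop_drop.
  by apply: (lyndon_drop hl); rewrite ?size_drop; lia.
have h2 : lexlt (drop j w) (drop i w) by apply: hmin; lia.
by rewrite (lexlt_asym h2) in h1.
Qed.

Lemma sf_idx_min_suffix w j : min_suffix_at w j -> sf_idx w = j.
Proof.
move=> hjw; have [hj0 hj _] := hjw; rewrite /sf_idx.
have -> : (size w).-1 = j.-1 + (size w - j).-1.+1 by lia.
rewrite iotaD find_cat size_iota ifF.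
  by rewrite add1n prednK //= min_suffix_lyndon // addn0 prednK.
apply/hasPn => i; rewrite mem_iota => /andP [hi0 hij].
by apply: min_suffix_longer_not_lyndon hjw hi0 _; lia.
Qed.

Lemma min_suffix_sf_idx w : 1 < size w -> min_suffix_at w (sf_idx w).
Proof. by case/min_suffix_exists => j hj; rewrite (sf_idx_min_suffix hj). Qed.

Lemma lyndon_take_min_suffix w j : lyndon w -> min_suffix_at w j -> lyndon (take j w).
Proof.
move=> hw [hj0 hj hmin]; set u := take j w; set v := drop j w.
have ew : w = u ++ v by rewrite cat_take_drop.
have hsu : size u = j by rewrite size_take hj.
apply: lyndon_intro => [|i hi0 hi]; first lia.
set u' := drop i u; have hsu' : size u' = j - i by rewrite size_drop hsu.
have hwl : lexlt w (u' ++ v).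
  have hiw : i < size w by lia.
  by have := lyndon_drop hw hi0 hiw; rewrite {2}ew drop_cat hi.
have hne : u != u' by apply/negP => /eqP e; move: hsu'; rewrite -e hsu; lia.
case/orP: (lexlt_total hne) => // /lexlt_cases [[s hs es]|hm].
  have ew' : w = u' ++ (s ++ v) by rewrite ew es catA.
  have h1 : lexlt (s ++ v) v by move: hwl; rewrite ew' lexlt_cat2l.
  have h2 : lexlt v (drop (j - i) w) by apply: hmin; lia.
  by rewrite ew' drop_size_cat // (lexlt_asym h1) in h2.
by have := mismatch_lexlt_cat v v hm; rewrite -ew (lexlt_asym hwl).
Qed.

Lemma sf_lyndon w : lyndon w -> 1 < size w ->
  [/\ lyndon (take (sf_idx w) w), lyndon (drop (sf_idx w) w)
    & lexlt (take (sf_idx w) w) (drop (sf_idx w) w)].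
Proof.
move=> hw hs; have hj := min_suffix_sf_idx hs; have [hj0 hjs _] := hj.
split; [exact: lyndon_take_min_suffix | exact: min_suffix_lyndon |].
apply: (@lexlt_trans w); last exact: lyndon_drop.
rewrite -[w in lexlt _ w](cat_take_drop (sf_idx w)) lexlt_prefix.
by rewrite -size_eq0 size_drop subn_eq0 -ltnNge.
Qed.

Lemma sf_idx_cat u v : lyndon u -> lyndon v -> lexlt u v ->
  [|| size u == 1, v == drop (sf_idx u) u | lexlt v (drop (sf_idx u) u)] ->
  sf_idx (u ++ v) = size u.
Proof.
move=> hu hv huv hc; have hu0 := lyndon_size hu; have hv0 := lyndon_size hv.
apply: sf_idx_min_suffix; split; rewrite ?size_cat; [lia|lia|].
move=> i hi0 hi hne; rewrite drop_size_cat // drop_cat; case: ltnP => hiu.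
  have hsu : 1 < size u by lia.
  apply: lexle_lexlt_cat; first by rewrite -size_eq0 -lt0n.
  move: hc; rewrite eqn_leq leqNgt hsu /=.
  have [_ _ hmin] := min_suffix_sf_idx hsu.
  have [->//|hij] := eqVneq i (sf_idx u).
  move=> /orP [/eqP ->|hvj]; apply/orP; right; first exact: hmin.
  exact: lexlt_trans hvj (hmin _ hi0 hiu hij).
by apply: lyndon_drop => //; move: hi hne hiu; rewrite ?size_cat => *; lia.
Qed.

Fixpoint words_upto n : seq (seq bool) :=
  [::] :: if n is n'.+1 then
             [seq b :: w | b <- [:: false; true], w <- words_upto n']
           else [::].

Lemma mem_words_upto n w : size w <= n -> w \in words_upto n.
Proof.
elim: n w => [|n IH] [|b w] //= hs; rewrite inE mem_cat !mem_cat.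
by case: b; rewrite map_f ?orbT // IH.
Qed.

Definition nbelow n u v := count (fun h => lexlt h u || lexlt h v) (words_upto n).

Lemma nbelowC n u v : nbelow n u v = nbelow n v u.
Proof. by apply: eq_count => h; rewrite orbC. Qed.

Lemma count_sub_lt (T : eqType) (p q : pred T) (s : seq T) z :
  subpred p q -> z \in s -> q z -> ~~ p z -> count p s < count q s.
Proof.
move=> hpq; elim: s => [|a s IH] //=; rewrite inE => /orP [/eqP <-|hz] hq hp.
  by rewrite (negbTE hp) hq add0n add1n ltnS sub_count.
rewrite -addnS leq_add ?IH //.
by case pa: (p a); rewrite // hpq.
Qed.

Lemma nbelow_lt n a b u v : lexlt a v -> lexlt b v -> size a <= n -> size b <= n ->
  nbelow n a b < nbelow n u v.
Proof.
move=> hav hbv ha hb; pose m := if lexlt a b then b else a.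
apply: (@count_sub_lt _ _ _ _ m).
- move=> h /= /orP [] hh; apply/orP; right.
    exact: lexlt_trans hh hav.
  exact: lexlt_trans hh hbv.
- by rewrite /m; case: ifP => _; apply: mem_words_upto.
- by rewrite /m; case: ifP => _; rewrite ?hav ?hbv orbT.
- rewrite /m; case: ifP => hab; first by rewrite lexlt_irr orbF (lexlt_asym hab).
  by rewrite lexlt_irr hab.
Qed.

Local Open Scope ring_scope.

Section SeriesAlgebra.
Variable K : fieldType.
Implicit Types f g h : ser K.

Lemma smul_nil f g : smul f g [::] = f [::] * g [::].
Proof. by rewrite /smul big_ord_recl big_ord0 addr0. Qed.

Lemma smul_cons f g a w :
  smul f g (a :: w) = f [::] * g (a :: w) + smul (fun u => f (a :: u)) g w.
Proof. by rewrite /smul big_ord_recl. Qed.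

Lemma smul_linl (c : K) f1 f2 g w :
  smul (fun u => c * f1 u + f2 u) g w = c * smul f1 g w + smul f2 g w.
Proof.
rewrite /smul mulr_sumr -big_split; apply: eq_bigr => i _.
by rewrite mulrDl mulrA.
Qed.

Lemma smulA f g h w : smul (smul f g) h w = smul f (smul g h) w.
Proof.
elim: w f => [|a w IH] f; first by rewrite !smul_nil mulrA.
rewrite !smul_cons smul_nil.
have -> : (fun u => smul f g (a :: u)) =
    (fun u => f [::] * g (a :: u) + smul (fun u => f (a :: u)) g u).
  by apply: functional_extensionality => u; rewrite smul_cons.
by rewrite smul_linl IH mulrDr !mulrA addrA.
Qed.

Section Sums.
Variables (T : Type) (s : seq T) (c : T -> K) (F : T -> ser K).
Let S : ser K := fun u => \sum_(x <- s) c x * F x u.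

Lemma smul_suml g w : smul S g w = \sum_(x <- s) c x * smul (F x) g w.
Proof.
rewrite /smul; under eq_bigr do rewrite mulr_suml.
rewrite exchange_big; apply: eq_bigr => x _.
by rewrite mulr_sumr; apply: eq_bigr => i _; rewrite mulrA.
Qed.

Lemma smul_sumr g w : smul g S w = \sum_(x <- s) c x * smul g (F x) w.
Proof.
rewrite /smul; under eq_bigr do rewrite mulr_sumr.
rewrite exchange_big; apply: eq_bigr => x _.
by rewrite mulr_sumr; apply: eq_bigr => i _; rewrite mulrCA.
Qed.

Lemma sbr_suml g w : sbr S g w = \sum_(x <- s) c x * sbr (F x) g w.
Proof.
rewrite /sbr smul_suml smul_sumr -sumrB.
by apply: eq_bigr => x _; rewrite mulrBr.
Qed.

Lemma sbr_sumr g w : sbr g S w = \sum_(x <- s) c x * sbr g (F x) w.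
Proof.
rewrite /sbr smul_suml smul_sumr -sumrB.
by apply: eq_bigr => x _; rewrite mulrBr.
Qed.

Lemma sdelta_sum w : sdelta S w = \sum_(x <- s) c x * sdelta (F x) w.
Proof.
transitivity (\sum_(i < size w) \sum_(x <- s) c x *
    (if nth true w i == false then F x (set_nth false w i true) else 0)).
  by apply: eq_bigr => i _; case: ifP => _ //; rewrite big1 // => x _; rewrite mulr0.
by rewrite exchange_big; apply: eq_bigr => x _; rewrite mulr_sumr.
Qed.

End Sums.

Lemma sdeltan_sum (T : Type) (s : seq T) (c : T -> K) (F : T -> ser K) k :
  sdeltan k (fun u => \sum_(x <- s) c x * F x u) =
  fun w => \sum_(x <- s) c x * sdeltan k (F x) w.
Proof.
elim: k => [|k IH] //; rewrite /sdeltan iterS -/(sdeltan k _) IH.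
by apply: functional_extensionality => w; rewrite sdelta_sum.
Qed.

Lemma sbr_anti f g w : sbr f g w = - sbr g f w.
Proof. by rewrite /sbr opprB. Qed.

Lemma sbrxx f w : sbr f f w = 0.
Proof. exact: subrr. Qed.

Lemma sbr_jacobi f g h w :
  sbr (sbr f g) h w = sbr (sbr f h) g w + sbr f (sbr g h) w.
Proof.
have smul_sbrl f1 f2 f3 :
    smul (sbr f1 f2) f3 w = smul (smul f1 f2) f3 w - smul (smul f2 f1) f3 w.
  by rewrite /smul -sumrB; apply: eq_bigr => i _; rewrite mulrBl.
have smul_sbrr f1 f2 f3 :
    smul f1 (sbr f2 f3) w = smul f1 (smul f2 f3) w - smul f1 (smul f3 f2) w.
  by rewrite /smul -sumrB; apply: eq_bigr => i _; rewrite mulrBr.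
rewrite /sbr !smul_sbrl !smul_sbrr !smulA; ring.
Qed.

End SeriesAlgebra.

Section HallSpan.
Variable K : fieldType.
Local Notation H := (hall_mono K).

Lemma hall_aux_fuel n m w : (0 < size w <= n)%N -> (size w <= m)%N ->
  hall_aux K n w = hall_aux K m w.
Proof.
elim: n m w => [|n IH] [|m] w /andP [h0 hn] hm //=; try lia.
case: ifP => // /negbT hs1; have hs : (1 < size w)%N by lia.
have [hj0 hj _] := min_suffix_sf_idx hs.
rewrite (IH m (take _ _)) ?(IH m (drop _ _)) // ?size_take ?size_drop ?hj; lia.
Qed.

Lemma hall_monoE w : (1 < size w)%N ->
  H w = sbr (H (take (sf_idx w) w)) (H (drop (sf_idx w) w)).
Proof.
move=> hs; have [hj0 hj _] := min_suffix_sf_idx hs.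
rewrite /hall_mono; case e: (size w) => [|n] /=; first by rewrite e in hs.
rewrite ifF; last by apply/negbTE; rewrite e in hs; lia.
by congr sbr; apply: hall_aux_fuel; rewrite ?size_take ?size_drop ?hj; lia.
Qed.

Lemma hall_mono_cat u v : lyndon u -> lyndon v -> lexlt u v ->
  [|| size u == 1%N, v == drop (sf_idx u) u | lexlt v (drop (sf_idx u) u)] ->
  H (u ++ v) = sbr (H u) (H v).
Proof.
move=> hu hv huv hc; have hu0 := lyndon_size hu; have hv0 := lyndon_size hv.
rewrite hall_monoE ?size_cat; last lia.
by rewrite (sf_idx_cat hu hv huv hc) take_size_cat // drop_size_cat.
Qed.

Definition hall_span (P : pred (seq bool)) (f : ser K) :=
  exists2 s : seq (K * seq bool), all (fun x => lyndon x.2 && P x.2) s &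
    f = fun u => \sum_(x <- s) x.1 * H x.2 u.

Lemma hall_span0 P : hall_span P (fun _ => 0).
Proof. by exists [::] => //; apply: functional_extensionality => u; rewrite big_nil. Qed.

Lemma hall_span_lin P c f g : hall_span P f -> hall_span P g ->
  hall_span P (fun u => c * f u + g u).
Proof.
move=> [s1 h1 ->] [s2 h2 ->]; exists ([seq (c * x.1, x.2) | x <- s1] ++ s2).
  by rewrite all_cat h2 andbT all_map.
apply: functional_extensionality => u; rewrite big_cat big_map mulr_sumr.
by congr (_ + _); apply: eq_bigr => x _; rewrite mulrA.
Qed.

Lemma hall_span_scale P c f : hall_span P f -> hall_span P (fun u => c * f u).
Proof.
move=> /(hall_span_lin c)/(_ (hall_span0 P)).
by congr hall_span; apply: functional_extensionality => u; rewrite addr0.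
Qed.

Lemma hall_span_sum P (T : eqType) (s : seq T) (c : T -> K) (F : T -> ser K) :
  (forall x, x \in s -> hall_span P (F x)) ->
  hall_span P (fun u => \sum_(x <- s) c x * F x u).
Proof.
elim: s => [|a s IH] hs.
  congr hall_span: (hall_span0 P).
  by apply: functional_extensionality => u; rewrite big_nil.
have /IH hsum : forall x, x \in s -> hall_span P (F x).
  by move=> x hx; apply: hs; rewrite inE hx orbT.
have := hall_span_lin (c a) (hs a (mem_head a s)) hsum.
by congr hall_span; apply: functional_extensionality => u; rewrite big_cons.
Qed.

Lemma sub_hall_span (P Q : pred (seq bool)) f :
  subpred P Q -> hall_span P f -> hall_span Q f.
Proof.
move=> hPQ [s hs ->]; exists s => //; apply/allP => x /(allP hs) /andP [-> /hPQ] //.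
Qed.

Lemma hall_span_mono (P : pred (seq bool)) w : lyndon w -> P w -> hall_span P (H w).
Proof.
move=> hw hP; exists [:: (1, w)]; first by rewrite /= hw hP.
by apply: functional_extensionality => u; rewrite big_seq1 mul1r.
Qed.

Lemma hall_span_sbrl P Q f g : hall_span P f ->
  (forall h, lyndon h -> P h -> hall_span Q (sbr (H h) g)) -> hall_span Q (sbr f g).
Proof.
move=> [s hs ->] hQ.
have -> : sbr (fun u => \sum_(x <- s) x.1 * H x.2 u) g =
    fun w => \sum_(x <- s) x.1 * sbr (H x.2) g w.
  by apply: functional_extensionality => w; rewrite sbr_suml.
by apply: hall_span_sum => x /(allP hs) /andP [hx1 hx2]; exact: hQ.
Qed.

Lemma hall_span_sbrr P Q f g : hall_span P g ->
  (forall h, lyndon h -> P h -> hall_span Q (sbr f (H h))) -> hall_span Q (sbr f g).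
Proof.
move=> [s hs ->] hQ.
have -> : sbr f (fun u => \sum_(x <- s) x.1 * H x.2 u) =
    fun w => \sum_(x <- s) x.1 * sbr f (H x.2) w.
  by apply: functional_extensionality => w; rewrite sbr_sumr.
by apply: hall_span_sum => x /(allP hs) /andP [hx1 hx2]; exact: hQ.
Qed.

Definition bracket_support u v : pred (seq bool) :=
  fun h => (lexlt h u || lexlt h v) && (size h <= size u + size v)%N.

Definition bracket_in_span u v := hall_span (bracket_support u v) (sbr (H u) (H v)).

Lemma bracket_in_span_refl u : bracket_in_span u u.
Proof.
rewrite /bracket_in_span (_ : sbr _ _ = fun _ => 0); first exact: hall_span0.
by apply: functional_extensionality => w; rewrite sbrxx.
Qed.

Lemma bracket_in_spanC u v : bracket_in_span u v -> bracket_in_span v u.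
Proof.
move=> /(hall_span_scale (-1)); rewrite /bracket_in_span.
have -> : sbr (H v) (H u) = fun w => -1 * sbr (H u) (H v) w.
  by apply: functional_extensionality => w; rewrite mulN1r -sbr_anti.
by apply: sub_hall_span => h; rewrite /bracket_support orbC addnC.
Qed.

Lemma bracket_support_lt u v h : lexlt u v -> bracket_support u v h -> lexlt h v.
Proof. by move=> huv /andP [/orP [/lexlt_trans /(_ huv)|]]. Qed.

Lemma sub_bracket_support u v u' v' : lexlt u' v -> lexlt v' v ->
  (size u' + size v' <= size u + size v)%N ->
  subpred (bracket_support u' v') (bracket_support u v).
Proof.
move=> h1 h2 hs h /andP [/orP hlt hsz]; apply/andP; split; last lia.
apply/orP; right; case: hlt => hh; [exact: lexlt_trans hh h1 | exact: lexlt_trans hh h2].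
Qed.

Lemma bracket_in_span_step u v : lyndon u -> lyndon v -> lexlt u v ->
  (forall u' v', lyndon u' -> lyndon v' ->
     (size u' + size v' < size u + size v)%N -> bracket_in_span u' v') ->
  (forall u' v', lyndon u' -> lyndon v' -> lexlt u' v -> lexlt v' v ->
     (size u' + size v' <= size u + size v)%N -> bracket_in_span u' v') ->
  bracket_in_span u v.
Proof.
move=> hu hv huv IHsize IHlt; have hu0 := lyndon_size hu.
have [hc|] :=
  boolP [|| size u == 1%N, v == drop (sf_idx u) u | lexlt v (drop (sf_idx u) u)].
  have [hl hlt] := lyndon_cat hu hv huv.
  rewrite /bracket_in_span -(hall_mono_cat hu hv huv hc).
  by apply: hall_span_mono; rewrite // /bracket_support hlt orbT size_cat leqnn.
rewrite !negb_or => /and3P [hsu1 hvne hvlt]; have hsu : (1 < size u)%N by lia.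
have [hu1 hu2 h12] := sf_lyndon hu hsu; have eH := hall_monoE hsu.
have hsz : size u = (size (take (sf_idx u) u) + size (drop (sf_idx u) u))%N.
  by rewrite -size_cat cat_take_drop.
move: hvne hvlt hu1 hu2 h12 eH hsz; set u1 := take _ u; set u2 := drop _ u.
move=> hvne hvlt hu1 hu2 h12 eH hsz.
have h2v : lexlt u2 v by case/orP: (lexlt_total hvne) => // h; rewrite h in hvlt.
have h1v := lexlt_trans h12 h2v.
(* [H u1, H v] and [H u2, H v] are shorter; bracketing their Hall words with
   H u2, resp. H u1, gives pairs of words below v. *)
have hu10 := lyndon_size hu1; have hu20 := lyndon_size hu2.
rewrite /bracket_in_span eH.
have -> : sbr (sbr (H u1) (H u2)) (H v) =
    fun w => 1 * sbr (sbr (H u1) (H v)) (H u2) w + sbr (H u1) (sbr (H u2) (H v)) w.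
  by apply: functional_extensionality => w; rewrite mul1r sbr_jacobi.
apply: hall_span_lin.
- apply: (hall_span_sbrl (IHsize _ _ hu1 hv _)) => [|x hx hxs]; first lia.
  have hxv := bracket_support_lt h1v hxs; case/andP: hxs => _ hxs.
  apply: sub_hall_span (IHlt _ _ hx hu2 hxv h2v _); last lia.
  by apply: sub_bracket_support => //; lia.
- apply: (hall_span_sbrr (IHsize _ _ hu2 hv _)) => [|x hx hxs]; first lia.
  have hxv := bracket_support_lt h2v hxs; case/andP: hxs => _ hxs.
  apply: sub_hall_span (IHlt _ _ hu1 hx h1v hxv _); last lia.
  by apply: sub_bracket_support => //; lia.
Qed.

Lemma bracket_in_span_lyndon u v : lyndon u -> lyndon v -> bracket_in_span u v.
Proof.
move=> hu hv; have [N hN] := ubnP (size u + size v).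
elim: N u v hu hv hN => [|N IHN] u v hu hv hs //.
have [c hc] := ubnP (nbelow N u v).
elim: c u v hu hv hs hc => // c IHc u v hu hv hs hc.
have [<-|huv] := eqVneq u v; first exact: bracket_in_span_refl.
wlog {huv} huv : u v hu hv hs hc / lexlt u v.
  move=> hw; case/orP: (lexlt_total huv) => h; first exact: hw.
  by apply/bracket_in_spanC/hw; rewrite // 1?addnC // nbelowC.
apply: bracket_in_span_step => // [u' v' hu' hv' hsz|u' v' hu' hv' h1 h2 hsz].
  by apply: IHN => //; lia.
apply: IHc => //; first lia.
by apply: leq_trans (nbelow_lt u h1 h2 _ _) hc; lia.
Qed.

Lemma hall_span_freeLie f : in_freeLie f -> hall_span predT f.
Proof.
elim=> {f} [b|f g _ hf _ hg|c f _ hf|f g _ hf _ hg].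
- exact: (hall_span_mono (w := [:: b]) (lyndon1 b)).
- congr hall_span: (hall_span_lin 1 hf hg).
  by apply: functional_extensionality => u; rewrite mul1r.
- exact: hall_span_scale.
- apply: (hall_span_sbrl hf) => u hu _; apply: (hall_span_sbrr hg) => v hv _.
  exact: sub_hall_span (bracket_in_span_lyndon hu hv).
Qed.

End HallSpan.

Lemma double_sum_symmetrize (R : fieldType) (T : Type) (s : seq T)
    (a : T -> R) (B : T -> T -> R) : 2%:R != 0 :> R ->
  \sum_(x <- s) \sum_(y <- s) a x * a y * B x y =
  \sum_(x <- s) \sum_(y <- s) 2%:R^-1 * a x * a y * (B x y + B y x).
Proof.
move=> two_neq0; set S := LHS.
have eS : S = \sum_(x <- s) \sum_(y <- s) a x * a y * B y x.
  rewrite exchange_big; apply: eq_bigr => x _.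
  by apply: eq_bigr => y _; rewrite [a y * _]mulrC.
transitivity (2%:R^-1 * (S + S)); first by field.
rewrite {2}eS -big_split mulr_sumr; apply: eq_bigr => x _.
rewrite -big_split mulr_sumr; apply: eq_bigr => y _ /=; ring.
Qed.

Section PseudodetExpansion.
Variable K : fieldType.

Lemma pseudodet0E k (A B : ser K) w :
  pseudodet k 0 A B w = - (sbr B (sdeltan k A) w + sbr A (sdeltan k B) w).
Proof. by rewrite /pseudodet sbr_anti [RHS]opprD. Qed.

Lemma sbr_sdeltan_pseudodet (T : Type) (s : seq T) (c : T -> K) (F : T -> ser K)
    (p : ser K) k w : 2%:R != 0 :> K -> p = (fun u => \sum_(x <- s) c x * F x u) ->
  sbr p (sdeltan k p) w =
  \sum_(x <- s) \sum_(y <- s) (- 2%:R^-1 * c x * c y) * pseudodet k 0 (F y) (F x) w.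
Proof.
move=> two_neq0 ->; rewrite sdeltan_sum sbr_suml.
under eq_bigr do rewrite sbr_sumr mulr_sumr.
under eq_bigr do under eq_bigr do rewrite mulrA.
rewrite (double_sum_symmetrize _ _ (fun x y => sbr (F x) (sdeltan k (F y)) w) two_neq0).
by apply: eq_bigr => x _; apply: eq_bigr => y _; rewrite pseudodet0E /=; ring.
Qed.

End PseudodetExpansion.

Theorem proposition3p4 (K : fieldType) (charK0 : [pchar K] =i pred0)
  (k : nat) (p : ser K) (hp : in_freeLie p) :
  exists (n : nat) (c : 'I_n -> K) (A B : 'I_n -> ser K),
    (forall i, is_hall (A i) /\ is_hall (B i)) /\
    forall w, sbr p (sdeltan k p) w = \sum_(i < n) c i * pseudodet k 0 (A i) (B i) w.
Proof.
have two_neq0 : 2%:R != 0 :> K by move/pcharf0P: charK0 => ->.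
have [s hs ep] := hall_span_freeLie hp.
pose t := [seq (- 2%:R^-1 * x.1 * y.1, (y.2, x.2)) | x <- s, y <- s].
pose z := tnth (in_tuple t).
exists (size t), (fun i => (z i).1),
  (fun i => hall_mono K (z i).2.1), (fun i => hall_mono K (z i).2.2); split.
  move=> i; have /allpairsP [[x y] [hx hy ->]] : z i \in t := mem_tnth i (in_tuple t).
  have /andP [hx' _] := allP hs x hx; have /andP [hy' _] := allP hs y hy.
  by split; [exists y.2 | exists x.2].
move=> w; pose U (d : K * (seq bool * seq bool)) :=
  d.1 * pseudodet k 0 (hall_mono K d.2.1) (hall_mono K d.2.2) w.
rewrite -(big_tnth _ _ _ xpredT U) big_allpairs_dep.
exact: (@sbr_sdeltan_pseudodet K _ s (fun x => x.1) (fun x => hall_mono K x.2) p k w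
  two_neq0 ep).
Qed.
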